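(* Let $X$ be a compact metric space and let $f\colon X\to X$ be a homeomorphism. If there exists a Borel probability measure on $X$ which is inner-distal with respect to $f$, then there exists an $f$-invariant Borel probability measure on $X$ which is inner-distal with respect to $f$.
   Context: For a homeomorphism $f\colon X\to X$ of a metric space $(X,d)$, the proximal cell of $x$ is $\mathcal{P}(x)=\{y\in X\colon \inf_{n\in\mathbb{Z}} d(f^n(x),f^n(y))=0\}$. A Borel probability measure $\mu$ is inner-distal with respect to $f$ if $\mu(\operatorname{Int}\mathcal{P}(x))=0$ for every $x\in X$. It is $f$-invariant if $\mu(f^{-1}(A))=\mu(A)$ for every Borel set $A$. *)

From HB Require Import structures.
From mathcomp Require Import all_boot all_order all_algebra.
From mathcomp Require Import all_classical all_reals all_analysis.
Set Implicit Arguments. Unset Strict Implicit. Unset Printing Implicit Defensive.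
Import Order.TTheory GRing.Theory Num.Theory.
Local Open Scope classical_set_scope.
Local Open Scope ring_scope.

(* Pointed metric spaces (measurable types in MathComp-Analysis must be
   pointed; harmless here since a probability measure forces X nonempty). *)
#[short(type="pointedMetricType")]
HB.structure Definition PointedMetric (K : numDomainType) :=
  { M of PseudoPointedMetric K M & PseudoMetric_isMetric K M }.

Notation borel X := (g_sigma_algebraType (@open X)).

Definition homeomorphism_with (X : topologicalType) (f g : X -> X) : Prop :=
  [/\ cancel f g, cancel g f, continuous f & continuous g].

Definition iterz (X : Type) (f g : X -> X) (n : int) : X -> X :=
  match n with
  | Posz k => iter k f
  | Negz k => iter k.+1 g
  end.

Definition proximal_cell (R : realType) (X : pointedMetricType R) (f g : X -> X)
    (x : X) : set X :=
  [set y | inf (range (fun n : int => mdist (iterz f g n x) (iterz f g n y))) = 0].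

Definition inner_distal (R : realType) (X : pointedMetricType R) (f g : X -> X)
    (mu : set (borel X) -> \bar R) : Prop :=
  forall x : X, mu (interior (proximal_cell f g x)) = 0%E.

Definition f_invariant (R : realType) (X : pointedMetricType R) (f : X -> X)
    (mu : set (borel X) -> \bar R) : Prop :=
  forall A : set (borel X), measurable A -> mu (f @^-1` A) = mu A.

(* The invariant measure is obtained from a Banach-type limit of Cesaro means.
   Fix an ultrafilter G on nat finer than the cofinite filter and put
   L(U) = G-lim_n 1/(n+1) sum_(i <= n) mu(f^-i U) for U open.  L is a monotone,
   finitely additive and subadditive content on the open sets with L(X) = 1, and
   L(f^-1 U) = L(U) since consecutive Cesaro means differ by O(1/n).  As
   f^-i (Int P(x)) = Int P(g^i x), inner-distality of mu makes L vanish on every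
   Int P(x).  The outer measure nu(A) = inf sum_k L(U_k), over the covers of A
   by open sets U_k, is additive on metrically separated sets, so every Borel
   set is Caratheodory measurable for it; compactness gives nu(X) = 1,
   f-invariance of L passes to nu, and nu(Int P(x)) <= L(Int P(x)) = 0. *)

From HB Require Import structures.
From mathcomp Require Import all_boot all_order all_algebra.
From mathcomp Require Import all_classical all_reals all_analysis.
From mathcomp Require Import lra zify.
Set Implicit Arguments. Unset Strict Implicit. Unset Printing Implicit Defensive.
Import Order.TTheory GRing.Theory Num.Theory numFieldNormedType.Exports.
Local Open Scope classical_set_scope.
Local Open Scope ring_scope.

Lemma ultra_fmap (T U : Type) (F : set_system T) (s : T -> U) :
  UltraFilter F -> UltraFilter (s @ F).
Proof.
move=> FU; split=> [|H HF sFH]; first exact: fmap_proper_filter.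
apply/seteqP; split=> [A HA|]; last exact: sFH.
have [//|FnA] := in_ultra_setVsetC (s @^-1` A) FU.
have /(filterI HA) : H (~` A) by exact: sFH.
by rewrite setICr => /filter_ex[].
Qed.

Lemma ultra_cvg_bounded (R : realType) (T : Type) (F : set_system T)
    (s : T -> R) (a b : R) :
  UltraFilter F -> (forall t, a <= s t <= b) -> cvg (s @ F).
Proof.
move=> FU sab; have sFU := ultra_fmap s FU.
have := @segment_compact R a b; rewrite compact_ultra => /(_ _ sFU) [|l [_ sl]].
  by apply: (@filterE _ F) => t /=; rewrite in_itv /= sab.
by apply/cvg_ex; exists l.
Qed.

Section probability_fine.
Variables (d : measure_display) (T : measurableType d) (R : realType).
Variable P : probability T R.

Lemma fine_prob_ge0 (A : set T) : 0 <= fine (P A).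
Proof. exact/fine_ge0/measure_ge0. Qed.

Lemma fine_prob_le1 (A : set T) : measurable A -> fine (P A) <= 1.
Proof. by move=> mA; rewrite -lee_fin fineK ?probability_le1 ?fin_num_measure. Qed.

Lemma fine_prob_le (A B : set T) : measurable A -> measurable B -> A `<=` B ->
  fine (P A) <= fine (P B).
Proof.
move=> mA mB AB; rewrite -lee_fin !fineK ?fin_num_measure //.
by apply: le_measure; rewrite ?inE.
Qed.

Lemma fine_probU (A B : set T) : measurable A -> measurable B ->
  A `&` B = set0 -> fine (P (A `|` B)) = fine (P A) + fine (P B).
Proof.
by move=> mA mB AB; rewrite measureU // fineD // fin_num_measure.
Qed.

Lemma fine_probU2 (A B : set T) : measurable A -> measurable B ->
  fine (P (A `|` B)) <= fine (P A) + fine (P B).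
Proof.
move=> mA mB; rewrite -lee_fin EFinD !fineK ?fin_num_measure //.
  exact: measureU2.
exact: measurableU.
Qed.

End probability_fine.

Lemma open_borel_measurable (X : ptopologicalType) (A : set X) :
  open A -> measurable (A : set (borel X)).
Proof. by move=> oA; apply: sub_sigma_algebra. Qed.

Record content_on_opens (R : realType) (X : topologicalType) (L : set X -> R) :
    Prop := ContentOnOpens {
  content_ge0 : forall A, open A -> 0 <= L A;
  content_le : forall A B, open A -> open B -> A `<=` B -> L A <= L B;
  contentU : forall A B, open A -> open B -> A `&` B = set0 ->
    L (A `|` B) = L A + L B;
  contentU2 : forall A B, open A -> open B -> L (A `|` B) <= L A + L B }.

Section cesaro_content.
Variables (R : realType) (X : ptopologicalType) (f : X -> X).
Variable mu : probability (borel X) R.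
Variable G : set_system nat.
Hypotheses (f_cont : continuous f) (G_ultra : UltraFilter G) (G_oo : G --> \oo).

Lemma open_preimage_iter n (A : set X) : open A -> open (iter n f @^-1` A).
Proof.
elim: n A => [|n IH] A oA //=.
exact: (IH (f @^-1` A)) (proj1 (continuousP f) f_cont A oA).
Qed.

Let measurable_preimage_iter n (A : set X) :
  open A -> measurable (iter n f @^-1` A : set (borel X)).
Proof. by move=> oA; exact: open_borel_measurable (open_preimage_iter n oA). Qed.

Definition cesaro_mean (A : set X) (n : nat) : R :=
  n.+1%:R^-1 * \sum_(i < n.+1) fine (mu (iter i f @^-1` A)).

Definition cesaro_content (A : set X) : R := lim (cesaro_mean A @ G).

Lemma cesaro_mean_ge0 A n : 0 <= cesaro_mean A n.
Proof.
by rewrite mulr_ge0 ?invr_ge0 ?ler0n ?sumr_ge0 // => i _; exact: fine_prob_ge0.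
Qed.

Lemma cesaro_mean_le1 A n : open A -> cesaro_mean A n <= 1.
Proof.
move=> oA; rewrite ler_pdivrMl ?ltr0n // mulr1.
apply: le_trans (_ : \sum_(i < n.+1) (1 : R) <= _).
  by apply: ler_sum => i _; exact: fine_prob_le1 (measurable_preimage_iter i oA).
by rewrite sumr_const card_ord.
Qed.

Lemma cvg_cesaro_mean A : open A -> cvg (cesaro_mean A @ G).
Proof.
move=> oA; apply: (@ultra_cvg_bounded _ _ _ _ 0 1) => n.
by rewrite cesaro_mean_ge0 cesaro_mean_le1.
Qed.

Lemma cesaro_mean_le A B n : open A -> open B -> A `<=` B ->
  cesaro_mean A n <= cesaro_mean B n.
Proof.
move=> oA oB AB; rewrite ler_wpM2l ?invr_ge0 ?ler0n //; apply: ler_sum => i _.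
by apply: fine_prob_le; [exact: measurable_preimage_iter..|move=> x /AB].
Qed.

Lemma cesaro_meanU A B n : open A -> open B -> A `&` B = set0 ->
  cesaro_mean (A `|` B) n = cesaro_mean A n + cesaro_mean B n.
Proof.
move=> oA oB AB; rewrite -mulrDr -big_split /=; congr (_ * _).
apply: eq_bigr => i _; rewrite preimage_setU fine_probU //; last first.
  by rewrite -preimage_setI AB preimage_set0.
all: exact: measurable_preimage_iter.
Qed.

Lemma cesaro_meanU2 A B n : open A -> open B ->
  cesaro_mean (A `|` B) n <= cesaro_mean A n + cesaro_mean B n.
Proof.
move=> oA oB; rewrite -mulrDr -big_split ler_wpM2l ?invr_ge0 ?ler0n //.
apply: ler_sum => i _; rewrite preimage_setU.
by apply: fine_probU2; exact: measurable_preimage_iter.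
Qed.

Lemma cesaro_mean_preimage A n : open A ->
  `|cesaro_mean (f @^-1` A) n - cesaro_mean A n| <= harmonic n.
Proof.
move=> oA; pose u i := fine (mu (iter i f @^-1` A)).
have u01 i : 0 <= u i <= 1.
  by rewrite fine_prob_ge0 fine_prob_le1 //; exact: measurable_preimage_iter.
rewrite -mulrBr -sumrB (eq_bigr (fun i : 'I_n.+1 => u i.+1 - u i)) //.
rewrite -(big_mkord xpredT (fun i => u i.+1 - u i)) telescope_sumr //.
rewrite normrM ger0_norm ?invr_ge0 ?ler0n // ler_piMr ?invr_ge0 ?ler0n //.
have /andP[? ?] := u01 n.+1; have /andP[? ?] := u01 0%N.
by rewrite ler_norml; apply/andP; split; lra.
Qed.

Lemma cesaro_content_on_opens : content_on_opens cesaro_content.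
Proof.
split=> [A oA|A B oA oB AB|A B oA oB AB|A B oA oB].
- apply: (limr_ge (cvg_cesaro_mean oA)).
  by apply: nearW => n; exact: cesaro_mean_ge0.
- apply: ler_lim (cvg_cesaro_mean oA) (cvg_cesaro_mean oB) _.
  by apply: nearW => n; exact: cesaro_mean_le.
- rewrite /cesaro_content -limD; [|exact: cvg_cesaro_mean..].
  have -> // : cesaro_mean (A `|` B) = cesaro_mean A + cesaro_mean B.
  by apply/funext => n; exact: cesaro_meanU.
- rewrite /cesaro_content -limD; [|exact: cvg_cesaro_mean..].
  apply: ler_lim (cvg_cesaro_mean (openU oA oB))
    (is_cvgD (cvg_cesaro_mean oA) (cvg_cesaro_mean oB)) _.
  by apply: nearW => n; exact: cesaro_meanU2.
Qed.

Lemma cesaro_contentT : cesaro_content setT = 1.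
Proof.
rewrite /cesaro_content (_ : cesaro_mean setT = fun=> 1) ?lim_cst //.
apply/funext => n; rewrite /cesaro_mean (eq_bigr (fun=> 1)) => [|i _].
  by rewrite sumr_const card_ord mulVf // pnatr_eq0.
by rewrite preimage_setT probability_setT.
Qed.

Lemma cesaro_content_preimage A : open A ->
  cesaro_content (f @^-1` A) = cesaro_content A.
Proof.
move=> oA; have ofA : open (f @^-1` A) := proj1 (continuousP f) f_cont A oA.
apply/eqP; rewrite -subr_eq0 /cesaro_content -limB; [|exact: cvg_cesaro_mean..].
apply/eqP/cvg_lim => //.
apply: cvg_trans (cvg_app _ G_oo) _.
have h0 : harmonic @ \oo --> (0 : R) := cvg_harmonic.
have nh0 : - harmonic @ \oo --> (0 : R) by rewrite -oppr0; exact: cvgN.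
apply: (squeeze_cvgr _ nh0 h0); apply: nearW => n /=.
by rewrite -ler_norml; exact: cesaro_mean_preimage.
Qed.

Lemma cesaro_content_eq0 A : (forall i, mu (iter i f @^-1` A) = 0%E) ->
  cesaro_content A = 0.
Proof.
move=> A0; rewrite /cesaro_content (_ : cesaro_mean A = fun=> 0) ?lim_cst //.
apply/funext => n; rewrite /cesaro_mean big1 ?mulr0 // => i _.
by rewrite A0.
Qed.

End cesaro_content.

Lemma homeomorphism_preimage_interior (X : topologicalType) (f g : X -> X)
    (S : set X) :
  homeomorphism_with f g -> f @^-1` interior S = interior (f @^-1` S).
Proof.
move=> [fK gK f_cont g_cont]; apply/seteqP; split=> x; first exact: f_cont.
move=> Sfx; rewrite /= (_ : S = g @^-1` (f @^-1` S)).
  by apply: g_cont; rewrite fK.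
by apply/seteqP; split=> y /=; rewrite gK.
Qed.

Section proximal_cell.
Variables (R : realType) (X : pointedMetricType R) (f g : X -> X).
Hypothesis fg : homeomorphism_with f g.

Let fK : cancel f g. Proof. by case: fg. Qed.
Let gK : cancel g f. Proof. by case: fg. Qed.

Lemma iterz_f n x : iterz f g n (f x) = iterz f g (n + 1) x.
Proof.
case: n => [k|[|k]].
- by rewrite (_ : (Posz k + 1 = Posz k.+1)%R) /= -?iterSr //; lia.
- by rewrite (_ : (Negz 0 + 1 = 0)%R) //= fK.
- rewrite (_ : (Negz k.+1 + 1 = Negz k)%R); last by lia.
  by rewrite /=; congr g; rewrite -iterS iterSr fK.
Qed.

Lemma iterz_g n x : iterz f g n (g x) = iterz f g (n - 1) x.
Proof.
case: n => [[|k]|k].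
- by rewrite (_ : (Posz 0 - 1 = Negz 0)%R).
- rewrite (_ : (Posz k.+1 - 1 = Posz k)%R); last by lia.
  by rewrite /iterz iterSr gK.
- rewrite (_ : (Negz k - 1 = Negz k.+1)%R); last by lia.
  by rewrite /iterz [in RHS]iterSr.
Qed.

Lemma proximal_cell_g x : proximal_cell f g (g x) = f @^-1` proximal_cell f g x.
Proof.
have orbit_dist y :
    range (fun n => mdist (iterz f g n (g x)) (iterz f g n y)) =
    range (fun n => mdist (iterz f g n x) (iterz f g n (f y))).
  apply/seteqP; split=> _ [n _ <-].
  - by exists (n - 1) => //; rewrite iterz_f iterz_g subrK.
  - by exists (n + 1) => //; rewrite iterz_g iterz_f addrK.
by apply/seteqP; split=> y; rewrite /proximal_cell /= orbit_dist.
Qed.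

Lemma preimage_iter_interior_proximal_cell i x :
  iter i f @^-1` interior (proximal_cell f g x) =
  interior (proximal_cell f g (iter i g x)).
Proof.
elim: i x => [//|i IH] x.
rewrite [in RHS]iterSr -IH proximal_cell_g.
by rewrite -(homeomorphism_preimage_interior _ fg).
Qed.

End proximal_cell.

Section metric_outer_measure.
Variables (R : realType) (X : pseudoPMetricType R).

Definition separated (A B : set X) :=
  exists2 r : R, 0 < r & forall a b, A a -> B b -> ~ ball a r b.

Lemma separatedS (A B A' B' : set X) : A `<=` A' -> B `<=` B' ->
  separated A' B' -> separated A B.
Proof. by move=> AA BB [r r0 h]; exists r => // a b /AA Aa /BB Bb; exact: h. Qed.

Lemma separated0 (B : set X) : separated set0 B.
Proof. by exists 1. Qed.

Lemma separated_open_nbhs (A B : set X) : separated A B ->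
  exists U V : set X, [/\ open U, open V, U `&` V = set0, A `<=` U & B `<=` V].
Proof.
move=> [r r0 AB]; have r2 : 0 < r / 2 by rewrite divr_gt0.
exists (\bigcup_(a in A) (ball a (r / 2))°), (\bigcup_(b in B) (ball b (r / 2))°).
split; try by apply: bigcup_open => ? _; exact: open_interior.
- apply/seteqP; split => // z [[a Aa /interior_subset az] [b Bb /interior_subset bz]].
  by apply: (AB a b Aa Bb); rewrite [r]splitr; exact: ball_triangle az (ball_sym bz).
- by move=> a Aa; exists a => //; exact: nbhsx_ballx.
- by move=> b Bb; exists b => //; exact: nbhsx_ballx.
Qed.

Variable nu : {outer_measure set X -> \bar R}.
Hypothesis nu_separated : forall A B : set X, separated A B ->
  (nu A + nu B <= nu (A `|` B))%E.

Lemma outer_measure_bigcup_separated (A : nat -> set X) m :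
  (forall k, (k < m)%N -> separated (\bigcup_(j < k) A j) (A k)) ->
  (\sum_(k < m) nu (A k) <= nu (\bigcup_(k < m) A k))%E.
Proof.
elim: m => [|m IH] sepA; first by rewrite big_ord0 outer_measure_ge0.
rewrite big_ord_recr /= bigcup_mkord big_ord_recr /= -bigcup_mkord.
apply: le_trans (nu_separated (sepA m (ltnSn m))).
by rewrite leeD2r // IH // => k km; apply: sepA; exact: ltnW.
Qed.

Section caratheodory_open.
Variables (O Y : set X).
Hypothesis O_open : open O.

Let S n := Y `&` [set x | ball x (harmonic n) `<=` O].

Let S_mono m n : (m <= n)%N -> S m `<=` S n.
Proof.
move=> mn x [Yx hx]; split => // z xz; apply/hx/(le_ball _ xz).
by rewrite lef_pV2 ?posrE // ler_nat ltnS.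
Qed.

Let S_cover : Y `&` O `<=` \bigcup_n S n.
Proof.
move=> x [Yx Ox]; have /nbhs_ballP[e /= e0 he] : nbhs x O by exact: open_nbhs_nbhs.
exists (Num.Def.trunc e^-1) => //; split => // z xz; apply/he/(le_ball _ xz)/ltW.
by rewrite -[e]invrK ltf_pV2 ?posrE ?invr_gt0 // invrK truncnS_gt.
Qed.

Let separated_S_setC n : separated (S n) (Y `&` ~` O).
Proof.
exists (harmonic n); first exact: harmonic_gt0.
by move=> a b [_ ha] [_ nb] ab; exact/nb/ha.
Qed.

Let separated_S_setCS p k : (p < k)%N -> separated (S p) (Y `&` ~` S k).
Proof.
move=> pk; exists (harmonic p - harmonic k).
  by rewrite subr_gt0 ltf_pV2 ?posrE // ltr_nat ltnS.
move=> a b [_ ha] [Yb nb] ab; apply: nb; split => // z bz; apply: ha.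
by rewrite -[harmonic p](subrK (harmonic k)); exact: ball_triangle ab bz.
Qed.

Let D k := S k.+1 `&` ~` S k.

Let D_sub k : D k `<=` S k.+1 `&` (Y `&` ~` S k).
Proof. by move=> x [Sx nSx]; split => //; split => //; case: Sx. Qed.

Let cover_tail n : Y `&` O `<=` S n `|` \bigcup_j D (j + n).
Proof.
move=> x /S_cover [m _]; elim: m => [|m IH] Smx.
  by left; exact: S_mono (leq0n n) _ Smx.
have [/IH //|nSmx] := pselect (S m x).
have [nm|mn] := leqP n m; last by left; exact: S_mono mn _ Smx.
by right; exists (m - n)%N => //; rewrite subnK.
Qed.

Let nu_YIO_le n : (nu (Y `&` O) <= nu (S n) + \sum_(n <= k <oo) nu (D k))%E.
Proof.
apply: le_trans (le_outer_measure nu _ _ (cover_tail n)) _.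
apply: le_trans (outer_measureU2 nu _ _) _; rewrite leeD2l //.
rewrite -nneseries_addn; last by move=> k; exact: outer_measure_ge0.
exact: outer_measure_sigma_subadditive.
Qed.

Let nu_S_YIC_le n : (nu (S n) + nu (Y `&` ~` O) <= nu Y)%E.
Proof.
apply: le_trans (nu_separated (separated_S_setC n)) _.
by apply: le_outer_measure => x [[]|[]].
Qed.

(* Each [D k.*2] (resp. [D k.*2.+1]) is separated from the union of the earlier
   ones of the same parity, so both halves of the series are bounded by [nu Y]. *)
Let sum_D_le m : (\sum_(0 <= k < m.*2) nu (D k) <= nu Y + nu Y)%E.
Proof.
have -> : (\sum_(0 <= k < m.*2) nu (D k) =
    \sum_(k < m) nu (D k.*2) + \sum_(k < m) nu (D k.*2.+1))%E.
  elim: m => [|m IH]; first by rewrite !big_geq ?big_ord0 ?adde0.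
  by rewrite doubleS !big_nat_recr //= IH !big_ord_recr /= addeACA addeA.
have D_subY k : D k `<=` Y by move=> x /D_sub [_ []].
apply: leeD.
- apply: le_trans (@outer_measure_bigcup_separated (fun k => D k.*2) m _) _.
    case=> [|k] _; first by rewrite bigcup_mkord big_ord0; exact: separated0.
    apply: separatedS (separated_S_setCS (ltnSn k.*2.+1)).
      move=> x [j /= jk /D_sub [Sx _]]; apply: S_mono Sx.
      by rewrite ltnS leq_double -ltnS.
    by move=> x /D_sub [].
  by apply: le_outer_measure => x [j _ /D_subY].
- apply: le_trans (@outer_measure_bigcup_separated (fun k => D k.*2.+1) m _) _.
    move=> k _; apply: separatedS (separated_S_setCS (ltnSn k.*2)).
      move=> x [j /= jk /D_sub [Sx _]]; apply: S_mono Sx.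
      by rewrite -doubleS leq_double.
    by move=> x /D_sub [].
  by apply: le_outer_measure => x [j _ /D_subY].
Qed.

Lemma caratheodory_open_le : (nu (Y `&` O) + nu (Y `&` ~` O) <= nu Y)%E.
Proof.
have [->|] := eqVneq (nu Y) +oo%E; first exact: leey.
rewrite -ltey => Yfin.
have sumD_fin : (\sum_(k <oo) nu (D k) < +oo)%E.
  apply: le_lt_trans (_ : _ <= nu Y + nu Y)%E _; last by rewrite lte_add_pinfty.
  apply: lime_le; first by apply: is_cvg_nneseries => k _ _; exact: outer_measure_ge0.
  apply: nearW => m; apply: le_trans (sum_D_le m).
  rewrite (@big_cat_nat _ _ _ m 0 m.*2) //= ?leeDl -?addnn ?leq_addr //.
  by apply: sume_ge0 => k _; exact: outer_measure_ge0.
have tail0 := nneseries_tail_cvg sumD_fin (fun k _ => outer_measure_ge0 nu (D k)).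
have : (nu Y + \sum_(n <= k <oo) nu (D k) @[n --> \oo] --> nu Y)%E.
  rewrite -[X in _ --> X]adde0; apply: cvgeD; [|exact: cvg_cst|exact: tail0].
  by rewrite fin_num_adde_defl.
apply: cvge_ge; apply: nearW => n; apply: le_trans (leeD2r _ (nu_YIO_le n)) _.
by rewrite addeAC leeD2r.
Qed.

End caratheodory_open.

Lemma caratheodory_borel (A : set (borel X)) : measurable A -> nu.-caratheodory A.
Proof.
apply: (smallest_sub (sigma_algebra_measurable (caratheodory_type nu))) => O O_open.
by apply: le_caratheodory_measurable => Y; exact: caratheodory_open_le.
Qed.

End metric_outer_measure.

Section content_measure.
Variables (R : realType) (X : pseudoPMetricType R) (L : set X -> R).
Hypothesis L_content : content_on_opens L.

Let L_ge0 : forall A, open A -> 0 <= L A := content_ge0 L_content.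

Let L0 : L set0 = 0.
Proof. by have := contentU L_content open0 open0 (setI0 _); rewrite setU0; lra. Qed.

Local Open Scope ereal_scope.

(* Off the open sets the value [+oo] turns [mu_ext] into an infimum over open
   covers. *)
Definition open_content (A : set X) : \bar R :=
  if `[< open A >] then (L A)%:E else +oo.

Let open_contentE A : open A -> open_content A = (L A)%:E.
Proof. by move=> oA; rewrite /open_content asboolT. Qed.

Let open_content0 : open_content set0 = 0.
Proof. by rewrite open_contentE ?L0 //; exact: open0. Qed.

Let open_content_ge0 A : 0 <= open_content A.
Proof.
by rewrite /open_content; case: asboolP => [oA|_]; rewrite ?lee_fin ?L_ge0 ?leey.
Qed.

Definition outer_content : set X -> \bar R := @mu_ext _ (borel X) R open_content.

HB.instance Definition _ := isOuterMeasure.Build R X outer_content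
  (@mu_ext0 _ (borel X) R open_content open_content0 open_content_ge0)
  (@mu_ext_ge0 _ (borel X) R open_content open_content_ge0)
  (@le_mu_ext _ (borel X) R open_content)
  (@mu_ext_sigma_subadditive _ (borel X) R open_content open_content_ge0).

Lemma outer_content_le_cover A (F : (set X)^nat) :
  (forall k, open (F k)) -> A `<=` \bigcup_k F k ->
  outer_content A <= \sum_(k <oo) (L (F k))%:E.
Proof.
move=> oF AF; apply: ereal_inf_lbound; exists F.
  by split=> // k; exact: open_borel_measurable.
by apply: eq_eseriesr => k _; rewrite open_contentE.
Qed.

Lemma outer_content_ge A z :
  (forall F : (set X)^nat, (forall k, open (F k)) -> A `<=` \bigcup_k F k ->
    z <= \sum_(k <oo) (L (F k))%:E) ->
  z <= outer_content A.
Proof.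
move=> zF; apply: le_ereal_inf_tmp => _ [F [_ AF] <-].
have [oF|/existsNP[k nFk]] := pselect (forall k, open (F k)).
  by rewrite (eq_eseriesr (fun k _ => open_contentE (oF k))); exact: zF.
rewrite (@eseries_pinfty _ _ _ k) ?leey // => [n _|]; last first.
  by rewrite /open_content asboolF.
by rewrite gt_eqF // (lt_le_trans _ (open_content_ge0 _)) // ltNy0.
Qed.

Lemma outer_content_le A : open A -> outer_content A <= (L A)%:E.
Proof.
move=> oA; pose F k := if k is 0%N then A else set0.
have oF k : open (F k) by case: k => [|k] //; exact: open0.
apply: le_trans (outer_content_le_cover oF _) _; first by move=> x Ax; exists 0%N.
rewrite (nneseries_split 0 1) ?eseries0 ?adde0 ?add0n ?big_nat1 //.
  by case=> [|i] //= _ _; rewrite L0.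
by case=> [|k] _; rewrite lee_fin ?L0 // L_ge0.
Qed.

Let L_bigcup_le (F : (set X)^nat) N : (forall k, open (F k)) ->
  (L (\bigcup_(k < N) F k) <= \sum_(k < N) L (F k))%R.
Proof.
move=> oF; elim: N => [|N IH]; first by rewrite bigcup_mkord !big_ord0 L0.
rewrite bigcup_mkord !big_ord_recr /= -bigcup_mkord.
apply: le_trans (contentU2 L_content _ (oF N)) _; first exact: bigcup_open.
by rewrite lerD2r.
Qed.

Lemma outer_content_separated A B : separated A B ->
  outer_content A + outer_content B <= outer_content (A `|` B).
Proof.
move=> /separated_open_nbhs[U [V [oU oV UV AU BV]]].
apply: outer_content_ge => F oF ABF.
have oFU k : open (F k `&` U) by exact: openI.
have oFV k : open (F k `&` V) by exact: openI.
have FU : outer_content A <= \sum_(k <oo) (L (F k `&` U))%:E.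
  apply: outer_content_le_cover => // x Ax.
  by have [k _ Fkx] := ABF x (or_introl Ax); exists k => //; split => //; exact: AU.
have FV : outer_content B <= \sum_(k <oo) (L (F k `&` V))%:E.
  apply: outer_content_le_cover => // x Bx.
  by have [k _ Fkx] := ABF x (or_intror Bx); exists k => //; split => //; exact: BV.
apply: le_trans (leeD FU FV) _.
rewrite -nneseriesD => [|k _ _|k _ _]; last 2 first.
- by rewrite lee_fin L_ge0.
- by rewrite lee_fin L_ge0.
apply: lee_nneseries => [k _ _|k _]; first by rewrite adde_ge0 // lee_fin L_ge0.
rewrite -EFinD lee_fin -contentU //.
  by apply: content_le => //; [exact: openU|move=> x [[]|[]]].
by rewrite setIACA UV setI0.
Qed.

Lemma outer_content_preimage_le (h : X -> X) A : continuous h ->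
  (forall U, open U -> L (h @^-1` U) = L U) ->
  outer_content (h @^-1` A) <= outer_content A.
Proof.
move=> h_cont Lh; apply: outer_content_ge => F oF AF.
have ohF k : open (h @^-1` F k) := proj1 (continuousP h) h_cont _ (oF k).
apply: le_trans (outer_content_le_cover ohF _) _.
  by move=> x /AF[k _ Fk]; exists k.
by rewrite (eq_eseriesr (fun k _ => congr1 EFin (Lh _ (oF k)))).
Qed.

Lemma outer_content_preimage (h k : X -> X) A : homeomorphism_with h k ->
  (forall U, open U -> L (h @^-1` U) = L U) ->
  outer_content (h @^-1` A) = outer_content A.
Proof.
move=> [hK kK h_cont k_cont] Lh.
have Lk U : open U -> L (k @^-1` U) = L U.
  move=> oU; rewrite -Lh; last exact: (proj1 (continuousP k) k_cont).
  by congr L; apply/seteqP; split=> x /=; rewrite hK.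
apply/eqP; rewrite eq_le outer_content_preimage_le //=.
rewrite [X in outer_content X <= _](_ : A = k @^-1` (h @^-1` A)).
  exact: outer_content_preimage_le.
by apply/seteqP; split=> x /=; rewrite kK.
Qed.

Let outer_content_sigma_additive :
  semi_sigma_additive (outer_content : set (borel X) -> \bar R).
Proof.
move=> F mF tF mU; have cara := caratheodory_borel outer_content_separated.
exact: (@caratheodory_measure_sigma_additive R X outer_content F
  (fun n => cara _ (mF n)) tF (cara _ mU)).
Qed.

Definition content_measure : measure (borel X) R :=
  HB.pack (outer_content : set (borel X) -> \bar R)
    (@isMeasure.Build _ (borel X) R outer_content (outer_measure0 outer_content)
      (outer_measure_ge0 outer_content) outer_content_sigma_additive).

Hypotheses (L_setT : L setT = 1%R) (X_compact : compact [set: X]).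

Lemma outer_contentT : outer_content setT = 1.
Proof.
apply/eqP; rewrite eq_le; apply/andP; split.
  by rewrite -L_setT; apply: outer_content_le; exact: openT.
apply: outer_content_ge => F oF FT.
have [D _ DF] : finite_subset_cover setT F setT.
  move: X_compact; rewrite compact_cover; apply=> [k _|x _]; first exact: oF.
  by have [k _ Fkx] := FT x I; exists k.
pose N := (\max_(k <- finmap.enum_fset D) k).+1.
have : (L setT <= \sum_(k < N) L (F k))%R.
  apply: le_trans (L_bigcup_le N oF); apply: content_le => //.
  - exact: openT.
  - exact: bigcup_open.
  by move=> x /DF[k /= Dk Fkx]; exists k => //=; rewrite /N ltnS leq_bigmax_seq.
rewrite L_setT -lee_fin -sumEFin => /le_trans; apply.
rewrite -(big_mkord xpredT (fun k => (L (F k))%:E)).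
by apply: nneseries_lim_ge => k _ _; rewrite lee_fin L_ge0.
Qed.

Definition content_probability : probability (borel X) R :=
  HB.pack_for (probability (borel X) R) (Measure.sort content_measure)
    (Measure_isProbability.Build _ _ _ (Measure.sort content_measure)
      outer_contentT).

End content_measure.

Theorem theorem2p14 (R : realType) (X : pointedMetricType R) (f g : X -> X) :
  compact [set: X] ->
  homeomorphism_with f g ->
  (exists mu : probability (borel X) R, inner_distal f g mu) ->
  exists nu : probability (borel X) R, f_invariant f nu /\ inner_distal f g nu.
Proof.
move=> X_compact fg [mu mu_distal]; have [_ _ f_cont _] := fg.
have [G [G_ultra G_oo]] := @ultraFilterLemma nat \oo _.
have L_content := cesaro_content_on_opens mu f_cont G_ultra.
have L_preimage := cesaro_content_preimage mu f_cont G_ultra G_oo.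
exists (content_probability L_content (cesaro_contentT f mu G_ultra) X_compact).
split=> [A _|x]; first exact (outer_content_preimage L_content A fg L_preimage).
apply/eqP; rewrite eq_le measure_ge0 andbT.
apply: le_trans (outer_content_le L_content (@open_interior _ _)) _.
rewrite lee_fin (cesaro_content_eq0 G_ultra) // => i.
by rewrite (preimage_iter_interior_proximal_cell fg) mu_distal.
Qed.
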